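(* Let $S$ be an intra-regular $\Gamma$-AG$^{**}$-groupoid. Then for all two-sided $\Gamma$-ideals $I,J$ of $S$, $I\Gamma J=I\cap J$.
   Context: Let $S$ and $\Gamma$ be nonempty sets with a map $S\times\Gamma\times S\to S$, $(x,\gamma,y)\mapsto x\gamma y$. $S$ is a $\Gamma$-AG-groupoid if $(x\gamma y)\delta z=(z\gamma y)\delta x$ for all $x,y,z\in S$, $\gamma,\delta\in\Gamma$; it is a $\Gamma$-AG$^{**}$-groupoid if moreover $a\alpha(b\beta c)=b\alpha(a\beta c)$ for all $a,b,c\in S$, $\alpha,\beta\in\Gamma$. For subsets $A,B\subseteq S$, $A\Gamma B=\{a\gamma b: a\in A,\gamma\in\Gamma,b\in B\}$. $S$ is intra-regular if for every $a\in S$ there exist $x,y\in S$ and $\beta,\gamma,\delta\in\Gamma$ with $a=(x\beta(a\delta a))\gamma y$. A nonempty subset $A$ is a two-sided $\Gamma$-ideal if $S\Gamma A\subseteq A$ and $A\Gamma S\subseteq A$. *)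

Set Implicit Arguments.

Section GammaDefs.
Variables (S G : Type) (op : S -> G -> S -> S).

Definition is_GammaAG : Prop :=
  forall (x y z : S) (g d : G), op (op x g y) d z = op (op z g y) d x.

Definition is_GammaAGss : Prop :=
  is_GammaAG /\
  forall (a b c : S) (al be : G), op a al (op b be c) = op b al (op a be c).

Definition GProd (A B : S -> Prop) : S -> Prop :=
  fun s => exists a g b, A a /\ B b /\ s = op a g b.

Definition intra_regular : Prop :=
  forall a : S, exists (x y : S) (be g d : G),
    a = op (op x be (op a d a)) g y.

Definition subset (A B : S -> Prop) : Prop := forall s, A s -> B s.

Definition two_sided_ideal (A : S -> Prop) : Prop :=
  (exists a, A a) /\
  subset (GProd (fun _ => True) A) A /\
  subset (GProd A (fun _ => True)) A.
End GammaDefs.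


(* In an intra-regular Γ-AG**-groupoid every element factors as
   a = (y β (x δ a)) γ a, with the left factor in S Γ (S Γ a); so if a lies in
   a left ideal I and in J, then a ∈ I Γ J.  The reverse inclusion only uses
   that I is a right and J a left ideal. *)

Section GammaIdeals.
Variables (S G : Type) (op : S -> G -> S -> S).

Lemma GProd_sub_inter (I J : S -> Prop) :
  subset (GProd op I (fun _ => True)) I ->
  subset (GProd op (fun _ => True) J) J ->
  subset (GProd op I J) (fun s => I s /\ J s).
Proof.
  intros IR JL s [a [g [b [Ha [Hb ->]]]]]; split.
  - apply IR; exists a, g, b; auto.
  - apply JL; exists a, g, b; auto.
Qed.

Lemma intra_regular_factor :
  is_GammaAGss op -> intra_regular op ->
  forall a, exists (x y : S) (be g d : G), a = op (op y be (op x d a)) g a.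
Proof.
  intros [HAG Hss] Hir a.
  destruct (Hir a) as [x [y [be [g [d Ha]]]]].
  rewrite (Hss x a a be d), (HAG a (op x d a) y be g) in Ha.
  exists x, y, be, g, d; exact Ha.
Qed.

Lemma inter_sub_GProd (I J : S -> Prop) :
  is_GammaAGss op -> intra_regular op ->
  subset (GProd op (fun _ => True) I) I ->
  subset (fun s => I s /\ J s) (GProd op I J).
Proof.
  intros Hss Hir IL a [Ha HJa].
  destruct (intra_regular_factor Hss Hir a) as [x [y [be [g [d Hfac]]]]].
  assert (HIxa : I (op x d a)) by (apply IL; exists x, d, a; auto).
  assert (HIyxa : I (op y be (op x d a))) by (apply IL; exists y, be, (op x d a); auto).
  exists (op y be (op x d a)), g, a; auto.
Qed.

End GammaIdeals.

Theorem mainTheorem11 (S G : Type) (op : S -> G -> S -> S)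
  (neS : inhabited S) (neG : inhabited G) :
  is_GammaAGss op -> intra_regular op ->
  forall I J : S -> Prop,
    two_sided_ideal op I -> two_sided_ideal op J ->
    forall s, GProd op I J s <-> (I s /\ J s).
Proof.
  intros Hss Hir I J [_ [IL IR]] [_ [JL _]] s; split.
  - apply GProd_sub_inter; assumption.
  - apply inter_sub_GProd; assumption.
Qed.
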